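(* Let $q\in X^*\setminus\{e\}$ and $\xi\in X^\omega$. The following are equivalent: (i) $\xi$ is quasiperiodic with quasiperiod $q$; (ii) the set $\mathrm{pref}(\xi)\cap Q_q$ is infinite; (iii) $\mathrm{pref}(\xi)\subseteq\mathrm{pref}(Q_q)$.
   Context: $X$ is a finite alphabet with $|X|\ge 2$; $X^*$ the finite words (empty word $e$), $X^\omega$ the infinite words; $|w|$ is length; $w\sqsubseteq\eta$ means $w$ is a prefix of $\eta$. For $B\subseteq X^*\cup X^\omega$ (or a single word), $\mathrm{pref}(B)$ is the set of all finite prefixes of elements of $B$. A word $\eta\in X^*\cup X^\omega$ is quasiperiodic with quasiperiod $q\in X^*\setminus\{e\}$ if for every natural number $j<|\eta|$ there is a prefix $u_j\sqsubseteq\eta$ with $j-|q|<|u_j|\le j$ and $u_j\cdot q\sqsubseteq\eta$. $Q_q$ is the set of finite words quasiperiodic with quasiperiod $q$ (including $e$). *)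

From mathcomp Require Import all_boot.
Set Implicit Arguments. Unset Strict Implicit. Unset Printing Implicit Defensive.

Definition ipref (X : Type) (w : seq X) (xi : nat -> X) : Prop :=
  w = mkseq xi (size w).

(* Quasiperiodicity of a finite word w with quasiperiod q:
   for every j < |w| there is a prefix u of w with j - |q| < |u| <= j
   and u q a prefix of w.  (j - |q| < |u| written as j < |u| + |q| over nat.) *)
Definition quasiper_fin (X : eqType) (q w : seq X) : Prop :=
  forall j, j < size w ->
    exists u : seq X, [/\ prefix u w, j < size u + size q, size u <= j
                          & prefix (u ++ q) w].

Definition quasiper_inf (X : eqType) (q : seq X) (xi : nat -> X) : Prop :=
  forall j,
    exists u : seq X, [/\ ipref u xi, j < size u + size q, size u <= j
                          & ipref (u ++ q) xi].

Definition Qset (X : eqType) (q : seq X) : seq X -> Prop := quasiper_fin q.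

Definition prefQ (X : eqType) (q : seq X) (w : seq X) : Prop :=
  exists v, Qset q v /\ prefix w v.

Definition fin_set (X : eqType) (S : seq X -> Prop) : Prop :=
  exists l : seq (seq X), forall w, S w -> w \in l.

From mathcomp Require Import all_boot.
From Stdlib Require Classical_Prop.

Set Implicit Arguments. Unset Strict Implicit. Unset Printing Implicit Defensive.

(* The prefixes of an infinite word form a chain, so among them prefixhood is
   just a comparison of lengths.  If xi is quasiperiodic, every prefix u q of xi
   provided by the definition is itself quasiperiodic: its positions below |u|
   are covered as in xi, the remaining ones by the final occurrence of q.  This
   gives arbitrarily long prefixes in Q_q, i.e. (i) -> (ii).  Every prefix of xi
   is a prefix of a longer prefix in Q_q, hence (ii) -> (iii).  For (iii) -> (i),
   cover position j inside an element of Q_q extending the prefix of xi of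
   length j + |q|; as q is nonempty, the occurrence of q covering j ends within
   that prefix, hence is an occurrence in xi. *)

Section InfinitePrefixes.

Variables (X : eqType) (xi : nat -> X).

Lemma ipref_mkseq n : ipref (mkseq xi n) xi.
Proof. by rewrite /ipref size_mkseq. Qed.

Lemma take_mkseq k n : take k (mkseq xi n) = mkseq xi (minn k n).
Proof. by rewrite /mkseq -map_take take_iota. Qed.

Lemma ipref_prefix u w : prefix u w -> ipref w xi -> ipref u xi.
Proof.
rewrite prefixE /ipref => /eqP <- w_xi.
by rewrite {1}w_xi take_mkseq size_take_min.
Qed.

Lemma ipref_prefixE u w :
  ipref u xi -> ipref w xi -> prefix u w = (size u <= size w).
Proof.
move=> u_xi w_xi; apply/idP/idP; first exact: size_prefix.
by move=> le_uw; rewrite prefixE {2}u_xi {1}w_xi take_mkseq (minn_idPl le_uw).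
Qed.

End InfinitePrefixes.

Lemma prefix_leq_common (X : eqType) (a w v : seq X) :
  prefix a v -> prefix w v -> size a <= size w -> prefix a w.
Proof.
move=> a_v /prefixP [s v_ws] le_aw.
by move: a_v; rewrite v_ws !prefixE takel_cat.
Qed.

Lemma size_le_sumn (T : eqType) (l : seq (seq T)) w :
  w \in l -> size w <= sumn (map size l).
Proof.
elim: l => //= a l IHl; rewrite in_cons => /predU1P [-> | /IHl le_w].
  exact: leq_addr.
exact: leq_trans le_w (leq_addl _ _).
Qed.

Section Quasiperiodicity.

Variables (X : eqType) (q : seq X) (xi : nat -> X).

Lemma quasiper_inf_Qset_cat u :
  quasiper_inf q xi -> ipref (u ++ q) xi -> Qset q (u ++ q).
Proof.
move=> qp_xi uq_xi j; rewrite size_cat => lt_j.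
have u_xi := ipref_prefix (prefix_prefix u q) uq_xi.
have [le_uj | lt_ju] := leqP (size u) j.
  by exists u; split; rewrite ?prefix_prefix ?prefix_refl.
have [v [v_xi lt_jv le_vj vq_xi]] := qp_xi j.
have le_vu : size v <= size u by apply: ltnW; apply: leq_ltn_trans lt_ju.
exists v; split=> //.
  by rewrite (ipref_prefixE v_xi uq_xi) size_cat (leq_trans le_vu (leq_addr _ _)).
by rewrite (ipref_prefixE vq_xi uq_xi) !size_cat leq_add2r.
Qed.

Lemma quasiper_inf_Qset_infinite :
  quasiper_inf q xi -> ~ fin_set (fun w => ipref w xi /\ Qset q w).
Proof.
move=> qp_xi [l Ql].
have [u [_ lt_N _ uq_xi]] := qp_xi (sumn (map size l)).
have := size_le_sumn (Ql _ (conj uq_xi (quasiper_inf_Qset_cat qp_xi uq_xi))).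
by rewrite size_cat leqNgt lt_N.
Qed.

Lemma Qset_infinite_prefQ :
  ~ fin_set (fun w => ipref w xi /\ Qset q w) ->
  forall w, ipref w xi -> prefQ q w.
Proof.
move=> infQ w w_xi; apply: Classical_Prop.NNPP => not_prefQ; apply: infQ.
(* every prefix of xi in Q_q is shorter than w, hence one of these *)
exists [seq mkseq xi n | n <- iota 0 (size w)] => v [v_xi Qv].
have [le_wv | lt_vw] := leqP (size w) (size v).
  by case: not_prefQ; exists v; rewrite (ipref_prefixE w_xi v_xi).
by rewrite v_xi map_f // mem_iota.
Qed.

Lemma prefQ_quasiper_inf :
  q != [::] -> (forall w, ipref w xi -> prefQ q w) -> quasiper_inf q xi.
Proof.
move=> q_nil prefQ_xi j.
have [v [Qv wv]] := prefQ_xi _ (ipref_mkseq xi (j + size q)).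
have size_w : size (mkseq xi (j + size q)) = j + size q by rewrite size_mkseq.
have lt_jv : j < size v.
  by apply: leq_trans (size_prefix wv); rewrite size_w -addn1 leq_add2l lt0n size_eq0.
have [u [_ lt_ju le_uj uqv]] := Qv j lt_jv.
have uqw : prefix (u ++ q) (mkseq xi (j + size q)).
  by apply: prefix_leq_common uqv wv _; rewrite size_w size_cat leq_add2r.
have uq_xi := ipref_prefix uqw (ipref_mkseq xi _).
by exists u; split=> //; apply: ipref_prefix uq_xi; apply: prefix_prefix.
Qed.

End Quasiperiodicity.

Theorem corollary2 (X : finType) (hX : 1 < #|X|) (q : seq X) (hq : q != [::])
    (xi : nat -> X) :
  (quasiper_inf q xi <->
     ~ fin_set (fun w => ipref w xi /\ Qset q w)) /\
  (quasiper_inf q xi <->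
     (forall w, ipref w xi -> prefQ q w)).
Proof.
have i_ii := @quasiper_inf_Qset_infinite _ q xi.
have ii_iii := @Qset_infinite_prefQ _ q xi.
have iii_i := @prefQ_quasiper_inf _ q xi hq.
split; split.
- exact: i_ii.
- by move=> /ii_iii/iii_i.
- by move=> /i_ii/ii_iii.
- exact: iii_i.
Qed.
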